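(* Let $\mathcal H$ be the $5$-uniform hypergraph defined below, let $e,f$ be two edges of $\mathcal H$, and let $\phi : V(\mathcal{H}_{ef}) \to V(\mathcal{H})$ be a monomorphism. If one of $e,f$ lies in $\{b, e_5\}$ and the other lies in $\{r, g, a\}$, then $\phi$ is the identity.
   Context: $\mathcal{H}$ has vertex set $\{z, v_1,\dots,v_9\}$ and edges $r=\{z,v_1,v_3,v_5,v_8\}$, $g=\{z,v_2,v_4,v_7,v_9\}$, $a=\{v_1,v_4,v_6,v_8,v_9\}$, $b=\{v_9,v_1,v_2,v_3,v_4\}$, and $e_i=\{v_i,v_{i+1},v_{i+2},v_{i+3},v_{i+4}\}$ for $i=1,\dots,5$. $\mathcal{H}_{ef}$ is the hypergraph with edge set $E(\mathcal H)\setminus\{e,f\}$, and $V(\mathcal H_{ef})$ is the union of its edges. A monomorphism $\phi: V(\mathcal{H}_{ef})\to V(\mathcal{H})$ is an injective map such that $\{\phi(y): y\in x\}$ is an edge of $\mathcal H$ for every edge $x$ of $\mathcal H_{ef}$; ''identity'' means $\phi(y)=y$ for all $y\in V(\mathcal H_{ef})$. *)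

From HB Require Import structures.
From mathcomp Require Import all_boot.
Set Implicit Arguments. Unset Strict Implicit. Unset Printing Implicit Defensive.

(* Vertices of H: z is encoded as 0, v_i as i (1 <= i <= 9). *)
Definition vtx := 'I_10.
Definition vz : vtx := inord 0.
Definition vv (i : nat) : vtx := inord i.

Inductive hedge := Er | Eg | Ea | Eb | E1 | E2 | E3 | E4 | E5.

Definition hedge_code (x : hedge) : 'I_9 :=
  match x with
  | Er => inord 0 | Eg => inord 1 | Ea => inord 2 | Eb => inord 3
  | E1 => inord 4 | E2 => inord 5 | E3 => inord 6 | E4 => inord 7
  | E5 => inord 8 end.
Definition hedge_decode (i : 'I_9) : hedge :=
  match val i with
  | 0 => Er | 1 => Eg | 2 => Ea | 3 => Eb | 4 => E1 | 5 => E2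
  | 6 => E3 | 7 => E4 | _ => E5 end.
Lemma hedge_codeK : cancel hedge_code hedge_decode.
Proof. by case; rewrite /hedge_decode /= inordK. Qed.
HB.instance Definition _ := Finite.copy hedge (can_type hedge_codeK).

Definition ei (i : nat) : {set vtx} :=
  [set vv i; vv i.+1; vv i.+2; vv i.+3; vv i.+4].

Definition edge_set (x : hedge) : {set vtx} :=
  match x with
  | Er => [set vz; vv 1; vv 3; vv 5; vv 8]
  | Eg => [set vz; vv 2; vv 4; vv 7; vv 9]
  | Ea => [set vv 1; vv 4; vv 6; vv 8; vv 9]
  | Eb => [set vv 9; vv 1; vv 2; vv 3; vv 4]
  | E1 => ei 1 | E2 => ei 2 | E3 => ei 3 | E4 => ei 4 | E5 => ei 5
  end.

Definition in_Hef (e f x : hedge) : bool := (x != e) && (x != f).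

Definition V_Hef (e f : hedge) : {set vtx} :=
  \bigcup_(x | in_Hef e f x) edge_set x.

(* phi : V(H_ef) -> V(H) is a monomorphism (values of phi outside V(H_ef) are irrelevant). *)
Definition monomorphism (e f : hedge) (phi : vtx -> vtx) : Prop :=
  {in V_Hef e f &, injective phi} /\
  (forall x, in_Hef e f x -> exists y, phi @: edge_set x = edge_set y).

From mathcomp Require Import all_boot.

Set Implicit Arguments.
Unset Strict Implicit.
Unset Printing Implicit Defensive.

(* Every vertex of H survives in H_ef, so phi is a permutation of V(H) that
   maps each remaining edge x onto some edge sigma x; hence v lies in x exactly
   when phi v lies in sigma x.  An exhaustive search over partial assignments
   sigma, pruned as soon as the incidences of some vertex can no longer be
   matched by any vertex, shows that sigma fixes every edge of H_ef.  Since
   the edges of H_ef separate the vertices, phi then fixes every vertex. *)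

Section IncidenceSearch.

(* Labels are enumerated by [labels] and compared through [edge] rather than by
   [enum T] and [==]: on a finType built from [inord] these do not reduce under
   [vm_compute]. *)
Variables (n : nat) (T : finType) (edge : T -> seq nat) (labels : seq T).

Definition agree (asg : seq (T * T)) (v w : nat) : bool :=
  all (fun p => (v \in edge p.1) == (w \in edge p.2)) asg.

Definition feasible (asg : seq (T * T)) : bool :=
  all (fun v => has (agree asg v) (iota 0 n)) (iota 0 n).

Fixpoint forced_fixed (asg : seq (T * T)) (rest : seq T) : bool :=
  if ~~ feasible asg then true else
  match rest with
  | [::] => all (fun p => edge p.1 == edge p.2) asg
  | x :: rest' => all (fun y => forced_fixed (rcons asg (x, y)) rest') labels
  end.

Definition covering (dom : seq T) : bool :=
  all (fun v => has (fun x => v \in edge x) dom) (iota 0 n).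

Definition separating (dom : seq T) : bool :=
  all (fun v => all (fun w =>
    agree [seq (x, x) | x <- dom] v w ==> (w == v)) (iota 0 n)) (iota 0 n).

Lemma feasible_catl (asg1 asg2 : seq (T * T)) :
  feasible (asg1 ++ asg2) -> feasible asg1.
Proof.
move=> /allP feas; apply/allP => v /feas /hasP [w w_in agree_vw].
by apply/hasP; exists w; move: agree_vw; rewrite // /agree all_cat => /andP [].
Qed.

Hypothesis mem_labels : forall y, y \in labels.

Lemma forced_fixedP (sigma : T -> T) (asg : seq (T * T)) (rest : seq T) :
  forced_fixed asg rest -> feasible (asg ++ [seq (x, sigma x) | x <- rest]) ->
  all (fun p => edge p.1 == edge p.2) (asg ++ [seq (x, sigma x) | x <- rest]).
Proof.
elim: rest asg => [|x rest IH] asg /=.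
  by rewrite !cats0; case: (feasible asg).
move=> forced feas; have feas_asg := feasible_catl feas.
move: forced; rewrite feas_asg => /allP /(_ (sigma x) (mem_labels _)) forced.
by rewrite -cat_rcons; apply: IH; rewrite // cat_rcons.
Qed.

Lemma forced_fixed_edges (sigma : T -> T) (dom : seq T) :
  forced_fixed [::] dom -> feasible [seq (x, sigma x) | x <- dom] ->
  {in dom, forall x, edge (sigma x) = edge x}.
Proof.
move=> forced feas x x_dom; have /allP fixed := forced_fixedP forced feas.
by apply/esym/eqP/(fixed (x, sigma x))/map_f.
Qed.

Variable E : T -> {set 'I_n}.
Hypothesis mem_E : forall v x, (v \in E x) = (val v \in edge x).

Lemma covering_edge (dom : seq T) (v : 'I_n) :
  covering dom -> exists2 x, x \in dom & v \in E x.
Proof.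
move=> /allP /(_ (val v)); rewrite mem_iota ltn_ord => /(_ isT).
by case/hasP=> x x_dom v_x; exists x; rewrite ?mem_E.
Qed.

Theorem incidence_rigid (dom : seq T) (phi : 'I_n -> 'I_n) :
  forced_fixed [::] dom -> separating dom -> injective phi ->
  (forall x, x \in dom -> exists y, phi @: E x = E y) -> phi =1 id.
Proof.
move=> forced /allP separ phi_inj phi_edge v.
pose sigma x := odflt x [pick y | phi @: E x == E y].
have phi_sigma x : x \in dom -> phi @: E x = E (sigma x).
  move=> /phi_edge [y phi_x]; rewrite /sigma.
  by case: pickP => [y' /eqP // | /(_ y)]; rewrite phi_x eqxx.
have incidence u x : x \in dom ->
    (val u \in edge x) = (val (phi u) \in edge (sigma x)).
  by move=> x_dom; rewrite -!mem_E -phi_sigma // mem_imset.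
have feas : feasible [seq (x, sigma x) | x <- dom].
  apply/allP => u; rewrite mem_iota => /andP [_ lt_un]; apply/hasP.
  exists (val (phi (Ordinal lt_un))); first by rewrite mem_iota ltn_ord.
  by apply/allP => _ /mapP [x x_dom ->]; rewrite -incidence.
have fixed := forced_fixed_edges forced feas.
apply/val_inj/eqP.
have v_iota (u : 'I_n) : val u \in iota 0 n by rewrite mem_iota ltn_ord.
move: (separ _ (v_iota v)) => /allP /(_ _ (v_iota (phi v))) /implyP; apply.
by apply/allP => _ /mapP [x x_dom ->]; rewrite incidence // fixed.
Qed.

End IncidenceSearch.

Definition edge_seq (x : hedge) : seq nat :=
  match x with
  | Er => [:: 0; 1; 3; 5; 8]
  | Eg => [:: 0; 2; 4; 7; 9]
  | Ea => [:: 1; 4; 6; 8; 9]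
  | Eb => [:: 9; 1; 2; 3; 4]
  | E1 => [:: 1; 2; 3; 4; 5]
  | E2 => [:: 2; 3; 4; 5; 6]
  | E3 => [:: 3; 4; 5; 6; 7]
  | E4 => [:: 4; 5; 6; 7; 8]
  | E5 => [:: 5; 6; 7; 8; 9]
  end.

Lemma mem_edge_set (v : vtx) (x : hedge) :
  (v \in edge_set x) = (val v \in edge_seq x).
Proof.
have eq_vv i : i < 10 -> (v == vv i) = (val v == i).
  by move=> lt_i10; rewrite -val_eqE /= inordK.
by case: x; rewrite /edge_set /ei !inE ?eq_vv // !orbA.
Qed.

Definition hedges : seq hedge := [:: Er; Eg; Ea; Eb; E1; E2; E3; E4; E5].

Lemma mem_hedges (x : hedge) : x \in hedges.
Proof. by case: x; rewrite !inE eqxx ?orbT. Qed.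

Lemma edge_seq_inj : injective edge_seq.
Proof. by case; case. Qed.

(* Not filtered by [in_Hef], which does not reduce under [vm_compute]. *)
Definition Hef_seq (e f : hedge) : seq hedge :=
  [seq x <- hedges | (edge_seq x != edge_seq e) && (edge_seq x != edge_seq f)].

Lemma mem_Hef_seq (e f x : hedge) : (x \in Hef_seq e f) = in_Hef e f x.
Proof. by rewrite mem_filter mem_hedges andbT !(inj_eq edge_seq_inj). Qed.

Definition rigid_pair (e f : hedge) : bool :=
  [&& covering 10 edge_seq (Hef_seq e f),
      forced_fixed 10 edge_seq hedges [::] (Hef_seq e f) &
      separating 10 edge_seq (Hef_seq e f)].

Lemma rigid_pair_fixed (e f : hedge) (phi : vtx -> vtx) :
  rigid_pair e f -> monomorphism e f phi -> {in V_Hef e f, forall y, phi y = y}.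
Proof.
case/and3P=> cover forced separ [phi_inj phi_edge] y _.
have V_Hef_full (v : vtx) : v \in V_Hef e f.
  have [x] := covering_edge mem_edge_set v cover.
  by rewrite mem_Hef_seq => Hef_x v_x; apply/bigcupP; exists x.
apply: (incidence_rigid mem_hedges mem_edge_set forced separ).
- by move=> u v; apply: phi_inj.
- by move=> x; rewrite mem_Hef_seq; apply: phi_edge.
Qed.

Lemma in_HefC (e f : hedge) : in_Hef e f =1 in_Hef f e.
Proof. by move=> x; rewrite /in_Hef andbC. Qed.

Lemma V_HefC (e f : hedge) : V_Hef e f = V_Hef f e.
Proof. exact: eq_bigl (in_HefC e f). Qed.

Lemma monomorphismC (e f : hedge) (phi : vtx -> vtx) :
  monomorphism e f phi -> monomorphism f e phi.
Proof.
rewrite /monomorphism V_HefC => -[phi_inj phi_edge]; split=> // x.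
by rewrite in_HefC; apply: phi_edge.
Qed.

Lemma rigid_pairs (e f : hedge) :
  e \in [:: Eb; E5] -> f \in [:: Er; Eg; Ea] -> rigid_pair e f.
Proof.
have all_rigid : all (fun e => all (rigid_pair e) [:: Er; Eg; Ea]) [:: Eb; E5].
  by vm_compute.
by move=> e_in f_in; apply: (allP (allP all_rigid e e_in)).
Qed.

Theorem lemma4p11 (e f : hedge) (phi : vtx -> vtx) :
  ((e \in [:: Eb; E5]) && (f \in [:: Er; Eg; Ea]) ||
   (f \in [:: Eb; E5]) && (e \in [:: Er; Eg; Ea])) ->
  monomorphism e f phi ->
  {in V_Hef e f, forall y, phi y = y}.
Proof.
case/orP=> [/andP [e_in f_in] | /andP [f_in e_in]] mono.
  exact: rigid_pair_fixed (rigid_pairs e_in f_in) mono.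
rewrite V_HefC.
exact: rigid_pair_fixed (rigid_pairs f_in e_in) (monomorphismC mono).
Qed.
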